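(* For every integer $n\ge1$, $\|[\mathcal D,\pi(K^nL^n)]\|=1$.
   Context: $\Omega=\{0,1\}^{\mathbb N}$ with the shift $\sigma$; for $a\in\{0,1\}$, $ax=(a,x_1,\dots)$. $\mu$ is the measure of maximal entropy (uniform Bernoulli product measure), $L^2(\mu)$ the Hilbert space of square-integrable functions. Ruelle operator $L\phi(x)=\frac12(\phi(0x)+\phi(1x))$; Koopman operator $K\phi=\phi\circ\sigma$. On $\mathcal H=L^2(\mu)\times L^2(\mu)$ (norm $|(\phi_1,\phi_2)|^2=|\phi_1|^2+|\phi_2|^2$), $\mathcal D=\begin{pmatrix}0&K\\ L&0\end{pmatrix}$, $\pi(A)=\begin{pmatrix}A&0\\0&A\end{pmatrix}$ for bounded $A$ on $L^2(\mu)$, $[\mathcal D,\pi(A)]=\mathcal D\pi(A)-\pi(A)\mathcal D$; $\|\cdot\|$ is the operator norm. *)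

From HB Require Import structures.
From mathcomp Require Import all_boot all_order all_algebra.
From mathcomp Require Import all_classical all_reals all_analysis.
Set Implicit Arguments. Unset Strict Implicit. Unset Printing Implicit Defensive.
Import Order.TTheory GRing.Theory Num.Theory.
Local Open Scope classical_set_scope.
Local Open Scope ring_scope.

(* Cylinder set [w_0 ... w_{n-1}] in {0,1}^N (bool = {0,1}, false = 0). *)
Definition cyl (n : nat) (w : nat -> bool) : set (nat -> bool) :=
  [set x | forall i, (i < n)%N -> x i = w i].

Definition cylinders : set (set (nat -> bool)) :=
  [set C | exists n w, C = cyl n w].

Definition Omega := g_sigma_algebraType cylinders.

Definition shift (x : Omega) : Omega := fun i => x i.+1.
Definition pcons (a : bool) (x : Omega) : Omega :=
  fun i => if i is i'.+1 then x i' else a.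

Section Ops.
Variable R : realType.

Definition Lop (phi : Omega -> R) : Omega -> R :=
  fun x => (phi (pcons false x) + phi (pcons true x)) / 2.
Definition Kop (phi : Omega -> R) : Omega -> R := phi \o shift.

Definition KnLn (n : nat) (phi : Omega -> R) : Omega -> R :=
  iter n Kop (iter n Lop phi).

(* [D, pi(A)] (phi1, phi2) = D (A phi1, A phi2) - pi(A) D (phi1, phi2)
   with D (psi1, psi2) = (K psi2, L psi1). *)
Definition commD (A : (Omega -> R) -> (Omega -> R))
  (v : (Omega -> R) * (Omega -> R)) : (Omega -> R) * (Omega -> R) :=
  (Kop (A v.2) \- A (Kop v.2), Lop (A v.1) \- A (Lop v.1)).

Variable mu : {measure set Omega -> \bar R}.

Definition l2sq (f : Omega -> R) : \bar R := (\int[mu]_x ((f x) ^+ 2)%:E)%E.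

Definition inL2 (f : Omega -> R) : Prop :=
  measurable_fun setT f /\ (l2sq f < +oo)%E.

Definition inH (v : (Omega -> R) * (Omega -> R)) : Prop := inL2 v.1 /\ inL2 v.2.

Definition hnorm (v : (Omega -> R) * (Omega -> R)) : \bar R :=
  match (l2sq v.1 + l2sq v.2)%E with
  | r%:E => (Num.sqrt r)%:E
  | _ => +oo%E
  end.

Definition opnorm (T : (Omega -> R) * (Omega -> R) -> (Omega -> R) * (Omega -> R))
  : \bar R :=
  ereal_sup [set hnorm (T v) | v in [set v | inH v /\ (hnorm v <= 1)%E]].

End Ops.

(* The uniform measure is invariant under the two inverse branches of the shift
   taken together: int F(0x) + int F(1x) = 2 int F, which holds on cylinders and
   hence for all measurable sets by uniqueness of measures.  Consequently K is an
   isometry and L a contraction of L^2(mu), and L K = 1.  For n = k + 1 this turns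
   the two components of [D, pi(K^n L^n)](phi1, phi2) into
   K^k (1 - K L) L^(k+1) phi1 and K^(k+1) (K L - 1) L^k phi2, and the projection
   K L satisfies |(K L - 1) h| <= |h|, so the norm is at most 1.  It equals 1 at
   (0, r_k), r_j the j-th Rademacher function: K^n L^n r_k = 0 and K^n L^n r_n = r_n,
   so the commutator maps (0, r_k) to (-r_n, 0). *)

From Pilot Require Import Defs.
From HB Require Import structures.
From mathcomp Require Import all_boot all_order all_algebra.
From mathcomp Require Import all_classical all_reals all_analysis.
From mathcomp Require Import measurable_realfun ring lra.
Import Order.TTheory GRing.Theory Num.Theory.
Local Open Scope classical_set_scope.
Local Open Scope ring_scope.

Lemma cyl0 (w : nat -> bool) : cyl 0 w = setT.
Proof. by apply/seteqP; split. Qed.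

Lemma measurable_cyl n w : measurable (cyl n w : set Omega).
Proof. by apply: sub_sigma_algebra; exists n, w. Qed.

Lemma setI_cyl n w m v : cyl n w `&` cyl m v = set0 \/
  cyl n w `&` cyl m v = cyl (maxn n m) (fun i => if (i < n)%N then w i else v i).
Proof.
have [wv|wv] := pselect (forall i, (i < n)%N -> (i < m)%N -> w i = v i); last first.
  left; apply/seteqP; split => x //= [xw xv]; apply: wv => i ltin ltim.
  by rewrite -xw // xv.
right; apply/seteqP; split => x /=.
  move=> [xw xv] i; rewrite leq_max => /orP lti.
  case: ifP => ltin; first exact: xw.
  by apply: xv; case: lti => //; rewrite ltin.
move=> xwv; split => i lti.
  by move: (xwv i); rewrite leq_max lti => ->.
move: (xwv i); rewrite leq_max lti orbT => /(_ isT).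
by case: ifP => // ltin ->; apply: wv.
Qed.

Lemma setI_closed_cylinders0 :
  setI_closed [set C : set Omega | C = set0 \/ cylinders C].
Proof.
move=> _ _ [->|[n [w ->]]] [->|[m [v ->]]]; rewrite ?set0I ?setI0; try by left.
by case: (setI_cyl n w m v) => ->; [left|right; do 2 eexists].
Qed.

Lemma preimage_pcons_cylS a n w : pcons a @^-1` cyl n.+1 w =
  if a == w 0%N then cyl n (w \o succn) else set0.
Proof.
have [->|aw] := eqVneq a (w 0%N).
  by apply/seteqP; split => x /= xw; [move=> i /(xw i.+1)|case=> [|i] //= /xw].
by apply/seteqP; split => x //= /(_ 0%N isT) /= xw; rewrite xw eqxx in aw.
Qed.

Lemma measurable_pcons a : measurable_fun setT (pcons a).
Proof.
apply: (@measurability _ _ Omega Omega setT _ cylinders erefl).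
move=> _ [_ [n [w ->]] <-]; rewrite setTI.
case: n => [|n]; first by rewrite cyl0 preimage_setT.
rewrite preimage_pcons_cylS.
by case: ifP => _; [exact: measurable_cyl|exact: measurable0].
Qed.

Lemma preimage_shift_cyl n w :
  Defs.shift @^-1` cyl n w = cyl n.+1 (pcons false w) `|` cyl n.+1 (pcons true w).
Proof.
apply/seteqP; split => x /=.
  by move=> xw; case E: (x 0%N); [right|left] => -[|i] //= /xw.
by case=> xw i /(xw i.+1).
Qed.

Lemma measurable_shift : measurable_fun setT Defs.shift.
Proof.
apply: (@measurability _ _ Omega Omega setT _ cylinders erefl).
move=> _ [_ [n [w ->]] <-]; rewrite setTI preimage_shift_cyl.
by apply: measurableU; exact: measurable_cyl.
Qed.

Section operators.
Context {R : realType}.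
Implicit Types f g : Omega -> R.

Lemma Lop_Kop f : Lop (Kop f) = f.
Proof. by apply: funext => x; rewrite /Lop /Kop /=; field. Qed.

Lemma Lop_cst0 : Lop (cst 0 : Omega -> R) = cst 0.
Proof. by apply: funext => x; rewrite /Lop /=; field. Qed.

Lemma iter_Lop_cst0 j : iter j (@Lop R) (cst 0) = cst 0.
Proof. by elim: j => //= j ->; exact: Lop_cst0. Qed.

Lemma iter_Kop_cst0 j : iter j (@Kop R) (cst 0) = cst 0.
Proof. by elim: j => //= j ->. Qed.

Lemma KnLn_cst0 j : KnLn j (cst 0 : Omega -> R) = cst 0.
Proof. by rewrite /KnLn iter_Lop_cst0 iter_Kop_cst0. Qed.

Lemma measurable_Lop f : measurable_fun setT f -> measurable_fun setT (Lop f).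
Proof.
move=> mf; apply: measurable_funM; last exact: measurable_cst.
by apply: measurable_funD; apply: measurableT_comp => //; exact: measurable_pcons.
Qed.

Lemma measurable_Kop f : measurable_fun setT f -> measurable_fun setT (Kop f).
Proof. by move=> mf; apply: measurableT_comp => //; exact: measurable_shift. Qed.

Lemma measurable_iter_Lop j f :
  measurable_fun setT f -> measurable_fun setT (iter j (@Lop R) f).
Proof. by move=> mf; elim: j => //= j; exact: measurable_Lop. Qed.

Lemma measurable_iter_Kop j f :
  measurable_fun setT f -> measurable_fun setT (iter j (@Kop R) f).
Proof. by move=> mf; elim: j => //= j; exact: measurable_Kop. Qed.

Lemma iter_Kop_sub j f g :
  iter j (@Kop R) (f \- g) = iter j (@Kop R) f \- iter j (@Kop R) g.
Proof. by elim: j => //= j ->. Qed.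

Lemma Kop_KnLn_sub k f :
  Kop (KnLn k.+1 f) \- KnLn k.+1 (Kop f) =
  iter k.+1 (@Kop R) (Kop (Lop (iter k (@Lop R) f)) \- iter k (@Lop R) f).
Proof.
rewrite iter_Kop_sub /KnLn -iterS iterSr.
by rewrite [iter k.+1 _ (Kop f)]iterSr Lop_Kop.
Qed.

Lemma Lop_KnLn_sub k f :
  Lop (KnLn k.+1 f) \- KnLn k.+1 (Lop f) =
  iter k (@Kop R) (iter k.+1 (@Lop R) f \- Kop (Lop (iter k.+1 (@Lop R) f))).
Proof.
rewrite iter_Kop_sub /KnLn iterS Lop_Kop.
by rewrite [iter k.+1 (@Kop R) _]iterSr -[iter k.+1 (@Lop R) (Lop f)]iterSr.
Qed.

End operators.

Section rademacher.
Context {R : realType}.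

Definition rademacher (j : nat) : Omega -> R := fun x => if x j then 1 else -1.

Lemma rademacher_sqr j x : rademacher j x ^+ 2 = 1.
Proof. by rewrite /rademacher; case: (x j); rewrite ?sqrrN expr1n. Qed.

Lemma iter_Kop_rademacher j : iter j (@Kop R) (rademacher 0) = rademacher j.
Proof. by elim: j => //= j ->. Qed.

Lemma measurable_rademacher j : measurable_fun setT (rademacher j).
Proof.
rewrite -iter_Kop_rademacher; apply: measurable_iter_Kop.
apply: measurable_fun_ifT => //; apply: (measurable_fun_bool true).
have -> : setT `&` (fun x : Omega => x 0%N) @^-1` [set true] = cyl 1 (fun _ => true).
  by apply/seteqP; split => x /= => [[_ x0] [|i]|x0] //; split => //; exact: x0.
exact: measurable_cyl.
Qed.

Lemma Lop_rademacher0 : Lop (rademacher 0) = cst 0.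
Proof. by apply: funext => x; rewrite /Lop /rademacher /=; field. Qed.

Lemma Lop_rademacherS j : Lop (rademacher j.+1) = rademacher j.
Proof. by apply: funext => x; rewrite /Lop /rademacher /=; field. Qed.

Lemma iter_Lop_rademacher j : iter j (@Lop R) (rademacher j) = rademacher 0.
Proof. by elim: j => // j IH; rewrite iterSr Lop_rademacherS. Qed.

Lemma KnLn_rademacher j : KnLn j (rademacher j) = rademacher j.
Proof. by rewrite /KnLn iter_Lop_rademacher iter_Kop_rademacher. Qed.

Lemma KnLnS_rademacher j : KnLn j.+1 (rademacher j) = cst 0.
Proof. by rewrite /KnLn /= iter_Lop_rademacher Lop_rademacher0 iter_Kop_cst0. Qed.

Lemma commD_KnLn_rademacher k :
  commD (KnLn k.+1) (cst 0, rademacher k) = (\- rademacher k.+1, cst 0).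
Proof.
rewrite /commD /= KnLnS_rademacher KnLn_rademacher Lop_cst0 KnLn_cst0 Lop_cst0.
congr (_, _); apply/funext => x; rewrite /Algebra.sub_fun /=.
- by rewrite /Algebra.opp_fun /Kop sub0r.
- by rewrite subrr.
Qed.

End rademacher.

Lemma ge0_half_double (R : realType) (a : \bar R) :
  (0 <= a)%E -> (2^-1%:E * (a + a))%E = a.
Proof.
case: a => [r| |] //= _; last by rewrite gt0_muley // lte_fin invr_gt0.
by rewrite -EFinD -EFinM; congr (_%:E); field.
Qed.

Section hilbert_norm.
Context {R : realType} (mu : {measure set Omega -> \bar R}).
Implicit Types (f g : Omega -> R) (u v : (Omega -> R) * (Omega -> R)).

Lemma l2sq_ge0 f : (0 <= l2sq mu f)%E.
Proof. by apply: integral_ge0 => x _; rewrite lee_fin sqr_ge0. Qed.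

Lemma l2sq_cst0 : l2sq mu (cst 0) = 0%E.
Proof.
by rewrite /l2sq (eq_integral (cst 0%E)) ?integral0 // => x _; rewrite expr0n.
Qed.

Lemma l2sqN f : l2sq mu (\- f) = l2sq mu f.
Proof. by apply: eq_integral => x _; rewrite /= sqrrN. Qed.

Lemma l2sq_subC f g : l2sq mu (f \- g) = l2sq mu (g \- f).
Proof. by apply: eq_integral => x _; rewrite /= -opprB sqrrN. Qed.

Lemma hnorm_le u v :
  (l2sq mu u.1 + l2sq mu u.2 <= l2sq mu v.1 + l2sq mu v.2)%E ->
  (hnorm mu u <= hnorm mu v)%E.
Proof.
rewrite /hnorm; have := adde_ge0 (l2sq_ge0 u.1) (l2sq_ge0 u.2).
move: (l2sq mu u.1 + _)%E (l2sq mu v.1 + _)%E => [s| |] [r| |] //= s0 sr.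
- by rewrite lee_fin ler_wsqrtr // -lee_fin.
- by rewrite leey.
Qed.

End hilbert_norm.

Section uniform_measure.
Context {R : realType} {mu : {measure set Omega -> \bar R}}.
Hypothesis hmu : forall (n : nat) (w : nat -> bool), mu (cyl n w) = ((2 ^-1) ^+ n)%:E.
Implicit Types f : Omega -> R.

Lemma mu_setT : mu setT = 1%E.
Proof. by rewrite -(cyl0 (fun _ => false)) hmu. Qed.

(* The measure structure on [pushforward] is parameterized by a measurability
   proof, which canonical structure inference cannot supply. *)
Definition pcons_image (a : bool) : {measure set Omega -> \bar R}.
Proof.
by refine (pushforward mu (pcons a) : {measure set Omega -> \bar R});
  exact: measurable_pcons.
Defined.

Lemma pcons_imageE a A : pcons_image a A = mu (pcons a @^-1` A).
Proof. by []. Qed.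

Lemma measure_add_pcons_image A : measurable A ->
  measure_add mu mu A = measure_add (pcons_image false) (pcons_image true) A.
Proof.
move=> mA; pose G := [set C : set Omega | C = set0 \/ cylinders C].
apply: (g_sigma_algebra_measure_unique G _ (fun _ => setT)).
- by move=> _ [->|[n [w ->]]]; [exact: measurable0|exact: measurable_cyl].
- by move=> _; right; exists 0%N, (fun _ => false); rewrite cyl0.
- by rewrite bigcup_const.
- exact: setI_closed_cylinders0.
- move=> _ [->|[n [w ->]]]; first by rewrite !measure0.
  rewrite /= /msum /= !big_ord_recl !big_ord0 !adde0 !pcons_imageE.
  case: n => [|n]; first by rewrite cyl0 !preimage_setT mu_setT -EFinD.
  rewrite !preimage_pcons_cylS hmu; case: (w 0%N) => /=;
    rewrite measure0 ?add0e ?adde0 hmu -EFinD exprS; congr (_%:E); by field.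
- by move=> _; rewrite /= /msum /= !big_ord_recl !big_ord0 adde0 mu_setT -EFinD ltry.
- by apply: (sub_sigma_algebra2 (D := setT) (M := cylinders)) => // C; right.
Qed.

Lemma ge0_integral_pcons (F : Omega -> \bar R) :
  measurable_fun setT F -> (forall x, 0 <= F x)%E ->
  (\int[mu]_x F (pcons false x) + \int[mu]_x F (pcons true x) =
   \int[mu]_x F x + \int[mu]_x F x)%E.
Proof.
move=> mF F0.
have image_integral a : (\int[mu]_x F (pcons a x) = \int[pcons_image a]_x F x)%E.
  by rewrite (ge0_integral_pushforward (measurable_pcons a)) ?preimage_setT.
rewrite !image_integral -!ge0_integral_measure_add //.
by apply: eq_measure_integral => A mA _; exact/esym/measure_add_pcons_image.
Qed.

Lemma ge0_integral_Lop (F : Omega -> R) :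
  measurable_fun setT F -> (forall x, 0 <= F x) ->
  (\int[mu]_x (Lop F x)%:E = \int[mu]_x (F x)%:E)%E.
Proof.
move=> mF F0.
have mFp a : measurable_fun setT (fun x => (F (pcons a x))%:E).
  by apply/measurable_EFinP; apply: measurableT_comp => //; exact: measurable_pcons.
rewrite -[RHS]ge0_half_double; last by apply: integral_ge0 => x _; rewrite lee_fin.
rewrite -ge0_integral_pcons => [|//|x]; first last.
- by rewrite lee_fin.
- exact/measurable_EFinP.
rewrite -ge0_integralD // -?ge0_integralZl //.
- by apply: eq_integral => x _; rewrite /Lop -EFinD -EFinM mulrC.
- exact: emeasurable_funD.
- by move=> x _; rewrite adde_ge0 // lee_fin.
all: by move=> x _; rewrite lee_fin.
Qed.

Lemma ge0_integral_Kop (F : Omega -> R) :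
  measurable_fun setT F -> (forall x, 0 <= F x) ->
  (\int[mu]_x (Kop F x)%:E = \int[mu]_x (F x)%:E)%E.
Proof.
move=> mF F0; rewrite -(ge0_integral_Lop (Kop F)) ?Lop_Kop //.
- exact: measurable_Kop.
- by move=> x; exact: F0.
Qed.

Lemma l2sq_Kop f : measurable_fun setT f -> l2sq mu (Kop f) = l2sq mu f.
Proof.
move=> mf; apply: (ge0_integral_Kop (fun x => f x ^+ 2)) => [|x].
- exact: measurable_funX.
- exact: sqr_ge0.
Qed.

Lemma l2sq_iter_Kop j f :
  measurable_fun setT f -> l2sq mu (iter j (@Kop R) f) = l2sq mu f.
Proof.
by move=> mf; elim: j => //= j <-; rewrite l2sq_Kop //; exact: measurable_iter_Kop.
Qed.

Lemma l2sq_Lop_le f : measurable_fun setT f -> (l2sq mu (Lop f) <= l2sq mu f)%E.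
Proof.
move=> mf; rewrite /l2sq -(ge0_integral_Lop (fun x => f x ^+ 2)) => [|//|x]; last first.
  exact: sqr_ge0.
  exact: measurable_funX.
apply: ge0_le_integral => //.
- by move=> x _; rewrite lee_fin sqr_ge0.
- by apply/measurable_EFinP; apply: measurable_funX; exact: measurable_Lop.
- by apply/measurable_EFinP; apply: measurable_Lop; exact: measurable_funX.
move=> x _; rewrite lee_fin /Lop.
set a := f (pcons false x); set b := f (pcons true x).
by have := sqr_ge0 (a - b); nra.
Qed.

Lemma l2sq_iter_Lop_le j f :
  measurable_fun setT f -> (l2sq mu (iter j (@Lop R) f) <= l2sq mu f)%E.
Proof.
move=> mf; elim: j => //= j; apply: le_trans; apply: l2sq_Lop_le.
exact: measurable_iter_Lop.
Qed.

(* Averaging over the first digit, [(K L f - f)^2] becomes [((f(0x) - f(1x))/2)^2]. *)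
Lemma l2sq_KL_sub_le f :
  measurable_fun setT f -> (l2sq mu (Kop (Lop f) \- f)%R <= l2sq mu f)%E.
Proof.
move=> mf.
have mg : measurable_fun setT (fun x => (Kop (Lop f) x - f x) ^+ 2).
  apply: measurable_funX; apply: measurable_funB => //.
  by apply: measurable_Kop; exact: measurable_Lop.
rewrite /l2sq -(ge0_integral_Lop _ mg) => [|x]; last exact: sqr_ge0.
rewrite -(ge0_integral_Lop (fun x => f x ^+ 2)) => [|//|x]; last first.
  exact: sqr_ge0.
  exact: measurable_funX.
apply: ge0_le_integral => //.
- by move=> x _; rewrite lee_fin /Lop divr_ge0 // addr_ge0 // sqr_ge0.
- by apply/measurable_EFinP; exact: measurable_Lop.
- by apply/measurable_EFinP; apply: measurable_Lop; exact: measurable_funX.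
move=> x _; rewrite lee_fin /Lop /Kop /=.
set a := f (pcons false x); set b := f (pcons true x).
by have := sqr_ge0 (a + b); nra.
Qed.

Lemma l2sq_rademacher j : l2sq mu (rademacher j) = 1%E.
Proof.
rewrite /l2sq (eq_integral (cst 1%E)) => [|x _]; last by rewrite rademacher_sqr.
by rewrite integral_cst // mu_setT mul1e.
Qed.

Lemma hnorm_commD_KnLn_le k (v : (Omega -> R) * (Omega -> R)) :
  measurable_fun setT v.1 -> measurable_fun setT v.2 ->
  (hnorm mu (commD (@KnLn R k.+1) v) <= hnorm mu v)%E.
Proof.
move=> mv1 mv2; apply: hnorm_le; rewrite addeC; apply: leeD.
- have mh := measurable_iter_Lop k.+1 _ mv1.
  rewrite /= Lop_KnLn_sub l2sq_iter_Kop; last first.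
    by apply: measurable_funB => //; apply: measurable_Kop; exact: measurable_Lop.
  rewrite l2sq_subC.
  exact: le_trans (l2sq_KL_sub_le _ mh) (l2sq_iter_Lop_le k.+1 _ mv1).
- have mh := measurable_iter_Lop k _ mv2.
  rewrite /= Kop_KnLn_sub l2sq_iter_Kop; last first.
    by apply: measurable_funB => //; apply: measurable_Kop; exact: measurable_Lop.
  exact: le_trans (l2sq_KL_sub_le _ mh) (l2sq_iter_Lop_le k _ mv2).
Qed.

End uniform_measure.

Theorem theorem2p20 (R : realType) (mu : {measure set Omega -> \bar R})
  (hmu : forall (n : nat) (w : nat -> bool), mu (cyl n w) = ((2 ^-1) ^+ n)%:E)
  (n : nat) (hn : (1 <= n)%N) :
  opnorm mu (commD (@KnLn R n)) = 1%E.
Proof.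
case: n hn => [//|k] _.
apply/eqP; rewrite eq_le; apply/andP; split.
  apply: ge_ereal_sup => _ [v [[[mv1 _] [mv2 _]] v_le1] <-].
  exact: le_trans (hnorm_commD_KnLn_le hmu k v mv1 mv2) v_le1.
have hnorm_v : hnorm mu (cst 0, rademacher k) = 1%E.
  by rewrite /hnorm /= l2sq_cst0 (l2sq_rademacher hmu) add0e sqrtr1.
have v_in_H : inH mu (cst 0, rademacher k).
  split; split=> /=; rewrite ?l2sq_cst0 ?(l2sq_rademacher hmu) ?ltry //.
  exact: measurable_rademacher.
apply: ereal_sup_ubound; exists (cst 0, rademacher k).
  by split => //; rewrite hnorm_v.
rewrite commD_KnLn_rademacher.
by rewrite /hnorm /= l2sqN l2sq_cst0 (l2sq_rademacher hmu) adde0 sqrtr1.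
Qed.
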